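(* Let $k\ge3$. At any $\tau\ge1$, for any pairwise distinct $i,j,r\in[d]$, $$\frac{\mathbb{P}[i,j,r\in B_\tau]}{\mathbb{P}[i,j\in B_\tau]\cdot\mathbb{P}[i,r\in B_\tau]}\le\frac{d-1}{k-1}.$$
   Context: Integers $3\le k\le d-3$, $[d]=\{1,\dots,d\}$. SAMPLING$(k,d,\mathbf{w})$ for nonzero $\mathbf{w}\in\mathbb{R}^d$: with $q_i=|w_i|/\|\mathbf{w}\|_1$, draw $I_1\in[d]$ with $\mathbb{P}(I_1=i)=q_i$, then $k-1$ distinct indices uniformly without replacement from $[d]\setminus\{I_1\}$; output the $k$-set $B$. At round $\tau$, $B_\tau=$SAMPLING$(k,d,\hat{\mathbf{w}}_{\tau-1})$ for a nonzero vector $\hat{\mathbf{w}}_{\tau-1}\in\mathbb{R}^d$ determined by $B_1,\dots,B_{\tau-1}$ (with $\hat{\mathbf{w}}_0=\frac1d\mathbf{1}_d$); probabilities are over $B_\tau$ conditional on $B_1,\dots,B_{\tau-1}$. *)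

From mathcomp Require Import all_boot all_order all_algebra.
Set Implicit Arguments. Unset Strict Implicit. Unset Printing Implicit Defensive.
Import Order.TTheory GRing.Theory Num.Theory.
Local Open Scope ring_scope.

Definition l1norm (R : realFieldType) (d : nat) (w : 'I_d -> R) : R :=
  \sum_(i < d) `|w i|.

Definition qprob (R : realFieldType) (d : nat) (w : 'I_d -> R) (i : 'I_d) : R :=
  `|w i| / l1norm w.

(* Probability that k-1 indices drawn uniformly without replacement from
   [d] \ {i1} form exactly the set S: uniform over the (k-1)-subsets. *)
Definition unif_rest (R : realFieldType) (k d : nat) (i1 : 'I_d)
  (S : {set 'I_d}) : R :=
  if (i1 \notin S) && (#|S| == k.-1)%N then
    (#|[set T : {set 'I_d} | (i1 \notin T) && (#|T| == k.-1)%N]|%:R)^-1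
  else 0.

(* Law of the output B of SAMPLING(k,d,w): first I_1 ~ q, then the remaining
   k-1 indices; B = {I_1} u S. *)
Definition sampling_prob (R : realFieldType) (k d : nat) (w : 'I_d -> R)
  (B : {set 'I_d}) : R :=
  \sum_(i1 < d) qprob w i1 *
     (if i1 \in B then unif_rest R k i1 (B :\ i1) else 0).

Definition sampling_Pr (R : realFieldType) (k d : nat) (w : 'I_d -> R)
  (E : pred {set 'I_d}) : R :=
  \sum_(B : {set 'I_d} | E B) sampling_prob k w B.

From mathcomp Require Import all_boot all_order all_algebra.
From mathcomp Require Import zify ring lra.
Set Implicit Arguments. Unset Strict Implicit. Unset Printing Implicit Defensive.
Import Order.TTheory GRing.Theory Num.Theory.
Local Open Scope ring_scope.

(** Let [N n] be the number of [k]-subsets of [[d]] containing a given [n]-set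
   and [Q A] the [q]-mass of [A].  Conditioning on the first index drawn,
   [P[A ⊆ B] = (Q A * N |A| + (1 - Q A) * N (|A| + 1)) / N 1].
   For [x = Q{i,j}], [y = Q{i,r}] and [z = Q{i,j,r} <= x + y], the bounds
   [N 3 <= N 2] and [N 2 * N 4 <= N 3 ^ 2] (log-concavity of binomials) give
   [N 2 * P[ijr] <= N 1 * P[ij] * P[ir]], and [N 1 / N 2 = (d - 1) / (k - 1)]. *)

Lemma card_supsets (T : finType) (A : {set T}) (k : nat) : (k <= #|T|)%N ->
  #|[set B : {set T} | (A \subset B) && (#|B| == k)]| = 'C(#|T| - #|A|, #|T| - k).
Proof.
move=> le_kT.
have cardC (C : {set T}) : (#|C| + #|~: C|)%N = #|T| by rewrite cardsC.
have -> : (#|T| - #|A|)%N = #|~: A| by have := cardC A; lia.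
rewrite -cards_draws -(card_imset _ (@setC_inj _)).
apply: eq_card => B; rewrite (can2_imset_pre _ (@setCK _) (@setCK _)) !inE.
rewrite -setCS setCK; congr (_ && _).
by have cardB := cardC B; apply/eqP/eqP; lia.
Qed.

Lemma card_sets_avoiding (T : finType) (x : T) (m : nat) :
  #|[set S : {set T} | (x \notin S) && (#|S| == m)]| = 'C(#|T|.-1, m).
Proof.
rewrite -(cardsC1 x) -cards_draws; apply: eq_card => S; rewrite !inE.
by rewrite subsetC sub1set inE.
Qed.

Lemma bin_log_concave (n c : nat) :
  ('C(n.+2, c) * 'C(n, c) <= 'C(n.+1, c) ^ 2)%N.
Proof.
have [lt_n1_c | le_c_n1] := ltnP n.+1 c.
  by rewrite (bin_small (ltnW lt_n1_c)) muln0.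
have down2 := mul_bin_down n.+2 c; have down1 := mul_bin_down n.+1 c.
have pos : (0 < (n.+2 - c) * n.+1)%N by rewrite muln_gt0 subn_gt0 ltnS le_c_n1.
rewrite -(leq_pmul2r pos).
have -> : ('C(n.+2, c) * 'C(n, c) * ((n.+2 - c) * n.+1) =
  ((n.+2 - c) * 'C(n.+2, c)) * (n.+1 * 'C(n, c)))%N by ring.
rewrite -down2 down1.
have -> : (n.+2 * 'C(n.+1, c) * ((n.+1 - c) * 'C(n.+1, c)) =
  'C(n.+1, c) ^ 2 * (n.+2 * (n.+1 - c)))%N by ring.
by rewrite leq_mul2l; apply/orP; right; nia.
Qed.

Definition mix {R : pzRingType} (t u v : R) : R := t * u + (1 - t) * v.

Lemma sum_mul_card_setU1 (R : pzRingType) (T : finType) (q : T -> R)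
    (G : nat -> R) (A : {set T}) :
  \sum_x q x = 1 ->
  \sum_x q x * G #|x |: A| = mix (\sum_(x in A) q x) (G #|A|) (G #|A|.+1).
Proof.
move=> sum_q1; rewrite /mix (bigID (mem A)) /=.
have -> : 1 - \sum_(x in A) q x = \sum_(x | x \notin A) q x.
  by rewrite -sum_q1 (bigID (mem A)) /= addrC addrK.
rewrite !mulr_suml; congr (_ + _); apply: eq_bigr => x xA.
  by rewrite (setUidPr _) ?sub1set.
by rewrite cardsU1 xA.
Qed.

Section Sampling.

Variables (R : realFieldType) (k d : nat) (w : 'I_d -> R).

Lemma qprob_ge0 (x : 'I_d) : 0 <= qprob w x.
Proof. by rewrite divr_ge0 ?sumr_ge0. Qed.

Lemma sum_qprob : (exists i, w i != 0) -> \sum_x qprob w x = 1.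
Proof.
case=> i0 wi0_neq0; rewrite -mulr_suml divff // lt0r_neq0 //.
by rewrite /l1norm (bigD1 i0) //= ltr_pwDl ?normr_gt0 ?sumr_ge0.
Qed.

Lemma sum_qprob_le1 (A : {set 'I_d}) :
  (exists i, w i != 0) -> \sum_(x in A) qprob w x <= 1.
Proof.
move=> w_neq0; rewrite -(sum_qprob w_neq0) [leRHS](bigID (mem A)) /= lerDl.
by rewrite sumr_ge0 // => x _; apply: qprob_ge0.
Qed.

Lemma sampling_probE (B : {set 'I_d}) : (0 < k)%N ->
  sampling_prob k w B =
  \sum_x qprob w x * ((x \in B) && (#|B| == k))%:R / 'C(d.-1, k.-1)%:R.
Proof.
move=> k_gt0; apply: eq_bigr => x _.
case: (boolP (x \in B)) => [xB | _]; last by rewrite mulr0 mul0r.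
rewrite /unif_rest card_sets_avoiding card_ord !inE eqxx /=.
have -> : (#|B :\ x| == k.-1) = (#|B| == k).
  by rewrite (cardsD1 x B) xB; case: (k) k_gt0.
by case: (#|B| == k); rewrite ?mulr1 ?mulr0 ?mul0r.
Qed.

Lemma sampling_Pr_supset (A : {set 'I_d}) : (0 < k <= d)%N ->
  sampling_Pr k w (fun B => A \subset B) =
  \sum_x qprob w x * 'C(d - #|x |: A|, d - k)%:R / 'C(d.-1, k.-1)%:R.
Proof.
case/andP=> k_gt0 le_kd; rewrite /sampling_Pr.
under eq_bigr do rewrite sampling_probE //.
rewrite exchange_big; apply: eq_bigr => x _.
rewrite -mulr_suml -mulr_sumr -natr_sum -[d in 'C(d - _, d - _)]card_ord.
rewrite -card_supsets ?card_ord // -sum1dep_card big_mkcondr /=.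
rewrite big_mkcond [in RHS]big_mkcond; congr (_ * _%:R / _).
apply: eq_bigr => B _; rewrite subUset sub1set.
by case: (x \in B); case: (A \subset B).
Qed.

Lemma sampling_Pr_supsetE (A : {set 'I_d}) :
  (exists i, w i != 0) -> (0 < k <= d)%N ->
  sampling_Pr k w (fun B => A \subset B) =
  mix (\sum_(x in A) qprob w x)
      'C(d - #|A|, d - k)%:R 'C(d - #|A|.+1, d - k)%:R / 'C(d.-1, k.-1)%:R.
Proof.
move=> w_neq0 k_range; rewrite sampling_Pr_supset // -mulr_suml.
by rewrite (@sum_mul_card_setU1 _ _ _ (fun n => 'C(d - n, d - k)%:R)) ?sum_qprob.
Qed.

End Sampling.

Lemma mix_mul_ge (R : realFieldType) (x y z a b c : R) :
  0 <= x -> 0 <= y -> z <= x + y -> z <= 1 ->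
  b <= a -> 0 <= b -> a * c <= b ^+ 2 ->
  a * mix z b c <= mix x a b * mix y a b.
Proof.
move=> x_ge0 y_ge0 le_z_xy z_le1 le_ba b_ge0 log_concave.
have concave_ge0 : 0 <= (b ^+ 2 - a * c) * (1 - z) by apply: mulr_ge0; lra.
have overlap_ge0 : 0 <= b * (a - b) * (x + y - z) by rewrite !mulr_ge0 ?subr_ge0.
have square_ge0 : 0 <= (a - b) ^+ 2 * (x * y) by rewrite mulr_ge0 ?sqr_ge0 ?mulr_ge0.
rewrite -subr_ge0 (_ : _ - _ =
  (b ^+ 2 - a * c) * (1 - z) + b * (a - b) * (x + y - z) + (a - b) ^+ 2 * (x * y)).
  by rewrite !addr_ge0.
by rewrite /mix; ring.
Qed.

Lemma mix_ratio_le (R : realFieldType) (x y z a b c M : R) :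
  0 <= x -> 0 <= y -> z <= x + y -> z <= 1 ->
  b <= a -> 0 < b -> a * c <= b ^+ 2 -> 0 < M ->
  mix z b c / M / (mix x a b / M * (mix y a b / M)) <= M / a.
Proof.
move=> x_ge0 y_ge0 le_z_xy z_le1 le_ba b_gt0 log_concave M_gt0.
have a_gt0 : 0 < a by apply: lt_le_trans le_ba.
have mix_gt0 t : 0 <= t -> 0 < mix t a b.
  move=> t_ge0; rewrite /mix (_ : _ + _ = b + t * (a - b)); last by ring.
  by rewrite ltr_wpDr ?mulr_ge0 ?subr_ge0.
have XY_gt0 : 0 < mix x a b * mix y a b by rewrite mulr_gt0 ?mix_gt0.
rewrite (_ : _ / _ = M / a * (a * mix z b c / (mix x a b * mix y a b))); last first.
  by field; rewrite !gt_eqF ?mix_gt0.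
rewrite ler_piMr ?divr_ge0 ?(ltW M_gt0) ?(ltW a_gt0) // ler_pdivrMr // mul1r.
exact: mix_mul_ge (ltW b_gt0) log_concave.
Qed.

Lemma mul_bin_supsets (d k : nat) : (1 < k <= d)%N ->
  (k.-1 * 'C(d.-1, k.-1) = d.-1 * 'C(d - 2, d - k))%N.
Proof.
case/andP=> k_gt1 le_kd.
have -> : (d - k = (d - 2) - (k - 2))%N by lia.
rewrite bin_sub; last by lia.
have -> : (d - 2 = d.-1.-1)%N by lia.
by rewrite mul_bin_diag (_ : (k - 2).+1 = k.-1)%N; last lia.
Qed.

Lemma bin_mix_ratio_le (R : realFieldType) (k d : nat) (x y z : R) :
  (3 <= k)%N -> (k <= d - 3)%N ->
  0 <= x -> 0 <= y -> z <= x + y -> z <= 1 ->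
  mix z 'C(d - 3, d - k)%:R 'C(d - 4, d - k)%:R / 'C(d.-1, k.-1)%:R /
    (mix x 'C(d - 2, d - k)%:R 'C(d - 3, d - k)%:R / 'C(d.-1, k.-1)%:R *
     (mix y 'C(d - 2, d - k)%:R 'C(d - 3, d - k)%:R / 'C(d.-1, k.-1)%:R))
  <= (d - 1)%:R / (k - 1)%:R.
Proof.
move=> k_ge3 le_k_d3 x_ge0 y_ge0 le_z_xy z_le1.
have -> : (d - 1)%:R / (k - 1)%:R = 'C(d.-1, k.-1)%:R / 'C(d - 2, d - k)%:R :> R.
  apply/eqP; rewrite eqr_div ?pnatr_eq0 -?lt0n ?bin_gt0; [|lia|lia].
  by rewrite -!natrM eqr_nat (mulnC 'C(_, _)) !subn1 mul_bin_supsets //; lia.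
apply: mix_ratio_le; rewrite // ?ltr0n ?bin_gt0; [|lia| |lia].
- by rewrite ler_nat leq_bin2l // leq_sub2l.
- rewrite -natrM -natrX ler_nat.
  have [-> ->] : (d - 2 = (d - 4).+2 /\ d - 3 = (d - 4).+1)%N by lia.
  exact: bin_log_concave.
Qed.

Theorem lemma11 (R : realFieldType) (k d : nat)
  (hk3 : (3 <= k)%N) (hkd : (k <= d - 3)%N)
  (w : 'I_d -> R) (hw : exists i, w i != 0)
  (i j r : 'I_d) (hij : i != j) (hir : i != r) (hjr : j != r) :
  sampling_Pr k w (fun B => [&& i \in B, j \in B & r \in B]) /
    (sampling_Pr k w (fun B => (i \in B) && (j \in B)) *
     sampling_Pr k w (fun B => (i \in B) && (r \in B)))
  <= (d - 1)%:R / (k - 1)%:R.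
Proof.
have k_range : (0 < k <= d)%N by lia.
have i_notin_jr : i \notin [set j; r] by rewrite !inE negb_or hij hir.
have -> : sampling_Pr k w (fun B => [&& i \in B, j \in B & r \in B]) =
          sampling_Pr k w (fun B => i |: [set j; r] \subset B).
  by apply: eq_bigl => B; rewrite !subUset !sub1set.
have -> : sampling_Pr k w (fun B => (i \in B) && (j \in B)) =
          sampling_Pr k w (fun B => [set i; j] \subset B).
  by apply: eq_bigl => B; rewrite !subUset !sub1set.
have -> : sampling_Pr k w (fun B => (i \in B) && (r \in B)) =
          sampling_Pr k w (fun B => [set i; r] \subset B).
  by apply: eq_bigl => B; rewrite !subUset !sub1set.
have := sum_qprob_le1 (i |: [set j; r]) hw.
rewrite !sampling_Pr_supsetE // cardsU1 i_notin_jr !cards2 hij hir hjr add1n.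
rewrite (big_setU1 _ i_notin_jr) !big_setU1 ?inE //= !big_set1 => ijr_le1.
have q_ge0 := qprob_ge0 w.
apply: bin_mix_ratio_le; rewrite ?addr_ge0 //.
by rewrite -addrA !lerD2l lerDr.
Qed.
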